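(* Let $n,k$ be positive integers with $n\ge k$. The integer $|\mathrm{ls}(n,k)|=|\mathrm{js}_n^k(1)|$ is the number of ordered pairs $(\sigma,\tau)$, where $\sigma$ is a permutation of $[n]_0=\{0,1,\dots,n\}$ with $k$ cycles and $\tau$ is a permutation of $[n]=\{1,\dots,n\}$ with $k$ cycles, such that $1\in\mathrm{Orb}_\sigma(0)$ and $\min\sigma=\min\tau$.
   Context: $\mathrm{js}_n^k(z)$ is defined by $\mathrm{js}_0^0(z)=1$, $\mathrm{js}_n^k(z)=0$ if $k\notin\{1,\dots,n\}$ (for $(n,k)\ne(0,0)$), and $\mathrm{js}_n^k(z)=\mathrm{js}_{n-1}^{k-1}(z)-(n-1)(n-1+z)\mathrm{js}_{n-1}^k(z)$ for $n,k\ge1$. The Legendre-Stirling numbers of the first kind are $\mathrm{ls}(n,k)=\mathrm{js}_n^k(1)$. For a permutation $\sigma$ and $j$ in its domain, $\mathrm{Orb}_\sigma(j)=\{\sigma^\ell(j):\ell\ge1\}$, and $\min(\sigma)=\{j\in[n]:j=\min(\mathrm{Orb}_\sigma(j)\cap[n])\}$ is the set of cyclic minima. *)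

From mathcomp Require Import all_boot all_order all_algebra all_fingroup.
Set Implicit Arguments. Unset Strict Implicit. Unset Printing Implicit Defensive.
Import GRing.Theory Num.Theory.
Local Open Scope ring_scope.

Fixpoint js (z : int) (n k : nat) : int :=
  match n with
  | 0%N => (k == 0%N)%:R
  | n'.+1 => match k with
             | 0%N => 0
             | k'.+1 => js z n' k' - (n'%:Z * (n'%:Z + z)) * js z n' k
             end
  end.

Definition ls (n k : nat) : int := js 1 n k.

(* [n]_0 = {0,...,n} is 'I_n.+1.  Cyclic minima of sigma on [n]_0:
   those j in [n] = {1..n} minimal in Orb_sigma(j) \cap [n]. *)
Definition cycmin0 (n : nat) (s : {perm 'I_n.+1}) : {set 'I_n.+1} :=
  [set j : 'I_n.+1 | (0 < j)%N &&
     [forall i in porbit s j, (0 < i)%N ==> (j <= i)%N]].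

(* [n] = {1..n} is encoded as 'I_n via i |-> i+1 (= lift ord0 i).
   Cyclic minima of tau, as a subset of {1..n} seen inside 'I_n.+1. *)
Definition cycmin1 (n : nat) (t : {perm 'I_n}) : {set 'I_n.+1} :=
  [set lift ord0 i | i in [set i : 'I_n | [forall x in porbit t i, (i <= x)%N]]].

(* Fix a ranking of the points.  The permutations of a set with a prescribed
   set M of cyclic minima are built by inserting the points outside M in
   increasing rank, each one right after some point of lower rank, so there
   are \prod_(i \notin M) #{j ranked below i} of them.  For tau on [n] with
   the natural order this is \prod_(i \notin Y) (i - 1).  For sigma on [n]_0
   we rank 0 between 1 and 2: then, when 1 lies in the cycle of 0, min sigma
   is exactly the set of cyclic minima, and the count is
   \prod_(i \notin Y) (i - 1 + [i >= 2]).  Summing the product of both counts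
   over the k-subsets Y of [n] gives the elementary symmetric function
   e_(n-k) of the numbers (i - 1) i, i = 1..n, i.e. |js_n^k(1)|, since
   js_n^k(1) is the coefficient of X^k in \prod_(i < n) (X - i (i + 1)). *)

From mathcomp Require Import all_boot all_order all_algebra all_fingroup zify.
Set Implicit Arguments. Unset Strict Implicit. Unset Printing Implicit Defensive.

Section PermutationOrbits.

Variable T : finType.
Implicit Types (s : {perm T}) (A B : {set T}) (a j x y : T).

Lemma porbit_eq s x y : y \in porbit s x -> porbit s y = porbit s x.
Proof. by move=> yx; apply/eqP; rewrite eq_porbit_mem. Qed.

Lemma porbit_closed s x y : y \in porbit s x -> s y \in porbit s x.
Proof. by case/porbitP=> i ->; rewrite -permM -expgSr mem_porbit. Qed.

Lemma porbit_sub_closed s B x : x \in B -> {in B, forall y, s y \in B} -> porbit s x \subset B.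
Proof.
move=> xB sB; apply/subsetP=> _ /porbitP[i ->].
by elim: i => [|i IHi]; rewrite ?expg0 ?perm1 // expgSr permM sB.
Qed.

Lemma porbit_fix s a : s a = a -> porbit s a = [set a].
Proof.
move=> sa; apply/setP=> y; rewrite inE.
by apply/porbitP/eqP=> [[i ->]|->]; [rewrite permX_fix | exists 0; rewrite expg0 perm1].
Qed.

Lemma perm_on_setD1 A s a : perm_on A s -> s a = a -> perm_on (A :\ a) s.
Proof.
move=> sA sa; apply/subsetP=> x sx; rewrite !inE (subsetP sA) // andbT.
by apply: contraTneq sx => ->; rewrite inE sa eqxx.
Qed.

(* [tperm j a * s] inserts the fixed point [a] of [s] into the cycle of [j],
   between [j] and [s j]. *)
Section InsertFixedPoint.

Variables (s : {perm T}) (j a : T).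
Hypothesis s_a : s a = a.
Let t := (tperm j a * s)%g.

Let tE y : t y = s (tperm j a y). Proof. by rewrite permM. Qed.

Lemma porbit_sub_tpermM x : porbit s x \subset porbit t x.
Proof.
have sy_t y : s y \in porbit t y.
  have [->|nya] := eqVneq y a; first by rewrite s_a porbit_id.
  have [->|nyj] := eqVneq y j.
    by rewrite (_ : s j = (t ^+ 2)%g j) ?mem_porbit // permX /= !tE tpermL s_a tpermR.
  have -> : s y = t y by rewrite tE tpermD 1?eq_sym.
  exact/porbit_closed/porbit_id.
apply: porbit_sub_closed (porbit_id t x) _ => y yx.
by rewrite -(porbit_eq yx) sy_t.
Qed.

Lemma porbit_tpermM_sub x : x != a -> porbit t x \subset a |: porbit s x.
Proof.
move=> nxa; set O := porbit s x.
have aO : a \notin O by rewrite porbit_sym porbit_fix // inE.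
have tO y : y \in O -> y != j -> t y \in O.
  move=> yO nyj; rewrite tE tpermD ?porbit_closed // eq_sym //.
  by apply: contraNneq aO => <-.
have [jO|njO] := boolP (j \in O).
  apply: porbit_sub_closed; first by rewrite setU1r ?porbit_id.
  move=> y /setU1P[->|yO]; first by rewrite tE tpermR setU1r ?porbit_closed.
  have [->|nyj] := eqVneq y j; first by rewrite tE tpermL s_a setU11.
  by rewrite setU1r ?tO.
apply: subset_trans (subsetUr _ _); apply: porbit_sub_closed (porbit_id s x) _ => y yO.
by rewrite tO //; apply: contraNneq njO => <-.
Qed.

End InsertFixedPoint.

Lemma tperm_on_mem A j a : j \in A -> a \in A -> perm_on A (tperm j a).
Proof.
by move=> jA aA; apply: subset_trans (tperm_on j a) _; apply/subsetP=> y /set2P[]->.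
Qed.

Lemma card_perm_on_tpermM A a (F : pred {perm T}) : a \in A ->
  #|[set s | perm_on A s && F s]| =
  \sum_(j in A) #|[set s | perm_on (A :\ a) s && F (tperm j a * s)%g]|.
Proof.
move=> aA; rewrite -sum1dep_card (partition_big (fun s => s^-1%g a) (mem A)); last first.
  by move=> s /andP[sA _]; rewrite /= perm_closed ?perm_onV.
apply: eq_bigr => j jA; rewrite sum1dep_card -[RHS](card_imset _ (mulgI (tperm j a))).
apply: eq_card => s; rewrite !inE; apply/idP/imsetP.
  case/andP=> /andP[sA Fs] /eqP sj; have sja : s j = a by rewrite -sj permKV.
  exists (tperm j a * s)%g; last by rewrite tpermKg.
  rewrite inE tpermKg Fs andbT perm_on_setD1 ?permM ?tpermR //.
  exact: perm_onM (tperm_on_mem jA aA) sA.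
case=> s2; rewrite inE => /andP[s2A Fs2] ->; rewrite Fs2 andbT.
have s2a : s2 a = a by apply: out_perm s2A _; rewrite !inE eqxx.
apply/andP; split.
  by apply: perm_onM (tperm_on_mem jA aA) (subset_trans s2A (subD1set _ _)).
have s2Va : (s2^-1)%g a = a by rewrite -{1}s2a permK.
by rewrite invMg tpermV permM s2Va tpermR.
Qed.

End PermutationOrbits.

Lemma setU1_eq_setD1 (T : finType) (a : T) (X M : {set T}) :
  a \notin X -> a \in M -> (a |: X == M) = (X == M :\ a).
Proof. by move=> aX aM; apply/eqP/eqP=> [<-|->]; rewrite ?setU1K ?setD1K. Qed.

Lemma card_setX_sum (I J : finType) (P : pred (I * J)) :
  #|[set p | P p]| = \sum_(y : J) #|[set x | P (x, y)]|.
Proof.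
rewrite (eq_card (B := [set p : I * J | P (p.1, p.2)])) => [|[x y]]; last by rewrite !inE.
rewrite -sum1dep_card big_mkcond -(pair_bigA _ (fun x y => if P (x, y) then 1 else 0)).
by rewrite exchange_big /=; apply: eq_bigr => y _; rewrite -sum1dep_card [RHS]big_mkcond.
Qed.

Lemma sum_comp_card (I J : finType) (g : I -> J) (F : J -> nat) :
  \sum_(i : I) F (g i) = \sum_(j : J) #|[set i | g i == j]| * F j.
Proof.
rewrite (partition_big g xpredT) //; apply: eq_bigr => j _.
by rewrite -sum_nat_cond_const; apply: eq_bigr => i /eqP->.
Qed.

Lemma sum_card_setC (T : finType) n k (F : {set T} -> nat) : #|T| = n -> k <= n ->
  \sum_(Y : {set T} | #|Y| == k) F (~: Y) = \sum_(I : {set T} | #|I| == n - k) F I.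
Proof.
move=> cardT kn; rewrite [RHS](reindex_inj (@setC_inj _)) /=; apply: eq_bigl => Y.
rewrite cardsCs cardT; have := max_card (mem (~: Y)); rewrite cardT.
by move: #|_| => m mn; apply/eqP/eqP; lia.
Qed.

Section CyclicMinima.

Variables (T : finType) (r : T -> nat).
Hypothesis r_inj : injective r.
Implicit Types (s : {perm T}) (A M : {set T}).

Definition cyc_min A s : {set T} :=
  [set j in A | [forall i in porbit s j, r j <= r i]].

Lemma cyc_min_sub A s : cyc_min A s \subset A.
Proof. by apply/subsetP=> x; rewrite inE => /andP[]. Qed.

Lemma card_porbits_cyc_min s : #|porbits s| = #|cyc_min setT s|.
Proof.
have -> : porbits s = porbit s @: cyc_min setT s.
  apply/setP=> O; apply/imsetP/imsetP=> [[x _ ->]|[x _ ->]]; last by exists x.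
  have [m mx m_min] := arg_minnP r (porbit_id s x).
  exists m; last by rewrite (porbit_eq mx).
  by rewrite !inE; apply/forall_inP=> i; rewrite (porbit_eq mx); apply: m_min.
apply: card_in_imset => x y; rewrite !inE => /forall_inP x_min /forall_inP y_min exy.
apply: r_inj; apply/eqP; rewrite eqn_leq x_min ?y_min ?exy ?porbit_id //.
by rewrite -exy porbit_id.
Qed.

Lemma cyc_min_tpermM A a j s :
  a \in A -> {in A, forall x, r x <= r a} -> j \in A -> perm_on (A :\ a) s ->
  cyc_min A (tperm j a * s)%g =
  if j == a then a |: cyc_min (A :\ a) s else cyc_min (A :\ a) s.
Proof.
move=> aA a_max jA sA; have s_a : s a = a by apply: out_perm sA _; rewrite !inE eqxx.
set t := (tperm j a * s)%g; apply/setP=> x.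
have [->|nxa] := eqVneq x a.
  have [ja|nja] := eqVneq j a.
    rewrite /t ja tperm1 mul1g !inE eqxx aA /=; apply/forall_inP=> i.
    by rewrite porbit_fix // inE => /eqP->.
  rewrite !inE aA eqxx /=; apply/negbTE/negP=> /forall_inP/(_ j) a_min.
  have tj : t j = a by rewrite permM tpermL s_a.
  have ja : j \in porbit t a by rewrite porbit_sym -tj porbit_closed ?porbit_id.
  by move: (a_min ja); rewrite leqNgt ltn_neqAle (inj_eq r_inj) nja a_max.
have x_minE : x \in A ->
    [forall i in porbit t x, r x <= r i] = [forall i in porbit s x, r x <= r i].
  move=> xA; apply/forall_inP/forall_inP=> x_min i xi.
    exact/x_min/(subsetP (porbit_sub_tpermM j s_a x)).
  have /setU1P[->|] := subsetP (porbit_tpermM_sub j s_a nxa) i xi; last exact: x_min.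
  exact: a_max.
rewrite !inE; case: (j == a); rewrite !inE (negbTE nxa) /=;
  by case xA: (x \in A); rewrite //= x_minE.
Qed.

Lemma rank_below_setD1 A a i : {in A, forall x, r x <= r a} -> i \in A ->
  [set j in A :\ a | r j < r i] = [set j in A | r j < r i].
Proof.
move=> a_max iA; apply/setP=> j; rewrite !inE.
by have [->|] //= := eqVneq j a; rewrite ltnNge a_max ?andbF.
Qed.

Lemma rank_below_max A a : {in A, forall x, r x <= r a} ->
  [set j in A | r j < r a] = A :\ a.
Proof.
move=> a_max; apply/setP=> j; rewrite !inE andbC.
by case jA: (j \in A); rewrite ?andbT ?andbF // ltn_neqAle a_max // andbT (inj_eq r_inj).
Qed.

Lemma card_cyc_min_max A M a : a \in A -> {in A, forall x, r x <= r a} ->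
  #|[set s | perm_on A s && (cyc_min A s == M)]| =
  #|[set s | perm_on (A :\ a) s && (a |: cyc_min (A :\ a) s == M)]| +
  #|A :\ a| * #|[set s | perm_on (A :\ a) s && (cyc_min (A :\ a) s == M)]|.
Proof.
move=> aA a_max; rewrite (card_perm_on_tpermM _ aA) (bigD1 a aA) /=.
congr (_ + _).
  apply: eq_card => s; rewrite !inE; case sA: (perm_on _ s) => //=.
  by rewrite cyc_min_tpermM // eqxx.
set N := #|[set s | perm_on (A :\ a) s && (cyc_min (A :\ a) s == M)]|.
rewrite (eq_bigr (fun _ => N)) => [|j /andP[jA nja]].
  rewrite sum_nat_cond_const; congr (_ * _).
  by apply: eq_card => j; rewrite !inE andbC.
apply: eq_card => s; rewrite !inE; case sA: (perm_on _ s) => //=.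
by rewrite cyc_min_tpermM // (negbTE nja).
Qed.

Lemma card_cyc_min_max_mem A M a : a \in A -> {in A, forall x, r x <= r a} -> a \in M ->
  #|[set s | perm_on A s && (cyc_min A s == M)]| =
  #|[set s | perm_on (A :\ a) s && (cyc_min (A :\ a) s == M :\ a)]|.
Proof.
move=> aA a_max aM; rewrite (card_cyc_min_max _ aA a_max).
have a_cyc_min s : a \notin cyc_min (A :\ a) s.
  by apply: contraT; rewrite negbK => /(subsetP (cyc_min_sub _ _)); rewrite !inE eqxx.
have -> : [set s | perm_on (A :\ a) s && (cyc_min (A :\ a) s == M)] = set0.
  apply/setP=> s; rewrite !inE; apply/negP=> /andP[_ /eqP sM].
  by move: (a_cyc_min s); rewrite sM aM.
by rewrite cards0 muln0 addn0; apply: eq_card => s; rewrite !inE setU1_eq_setD1.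
Qed.

Lemma card_cyc_min_max_notin A M a : a \in A -> {in A, forall x, r x <= r a} -> a \notin M ->
  #|[set s | perm_on A s && (cyc_min A s == M)]| =
  #|A :\ a| * #|[set s | perm_on (A :\ a) s && (cyc_min (A :\ a) s == M)]|.
Proof.
move=> aA a_max naM; rewrite (card_cyc_min_max _ aA a_max).
have -> : [set s | perm_on (A :\ a) s && (a |: cyc_min (A :\ a) s == M)] = set0.
  apply/setP=> s; rewrite !inE; apply/negP=> /andP[_ /eqP sM].
  by move: naM; rewrite -sM setU11.
by rewrite cards0 add0n.
Qed.

Lemma card_cyc_min A M : M \subset A ->
  #|[set s | perm_on A s && (cyc_min A s == M)]| =
  \prod_(i in A :\: M) #|[set j in A | r j < r i]|.
Proof.
move: {2}#|A| (erefl #|A|) => n; elim: n A M => [|n IHn] A M cardA MA.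
  move/cards0_eq: cardA MA => A0; rewrite A0 subset0 => /eqP->.
  rewrite setD0 big_set0 -[RHS](cards1 (1%g : {perm T})); apply: eq_card => s.
  rewrite !inE (_ : cyc_min set0 s = set0) ?eqxx ?andbT; last first.
    by apply/eqP; rewrite -subset0 cyc_min_sub.
   apply/idP/eqP=> [s0|->]; last exact: perm_on1.
  by apply: perm_on_id s0 _; rewrite cards0.
have [x0 x0A] : {x0 | x0 \in A} by apply/sigW/set0Pn; rewrite -card_gt0 cardA.
have [a aA a_max] := arg_maxnP r x0A.
have {}aA : a \in A by [].
have {}a_max : {in A, forall x, r x <= r a} by [].
have cardA' : #|A :\ a| = n by move: cardA; rewrite (cardsD1 a) aA => -[].
have [aM|naM] := boolP (a \in M).
  rewrite (card_cyc_min_max_mem aA a_max aM) IHn ?setSD //.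
  have -> : A :\ a :\: (M :\ a) = A :\: M.
    by apply/setP=> i; rewrite !inE; case: eqVneq => [->|]; rewrite ?aM ?andbF.
  by apply: eq_bigr => i /setDP[iA _]; rewrite rank_below_setD1.
have aAM : a \in A :\: M by rewrite inE naM.
rewrite (card_cyc_min_max_notin aA a_max naM) IHn ?subsetD1 ?MA // (bigD1 a aAM) /=.
rewrite rank_below_max // cardA'; congr (_ * _); apply: eq_big => i.
  by rewrite -[pred_of_set _ i]/(i \in A :\: M) !inE; case: (i == a); rewrite ?andbF ?andbT.
by case/setDP=> /setD1P[_ iA] _; rewrite rank_below_setD1.
Qed.

Lemma card_cyc_minT M :
  #|[set s | cyc_min setT s == M]| = \prod_(i in ~: M) #|[set j | r j < r i]|.
Proof.
rewrite -setTD (eq_bigr (fun i => #|[set j in [set: T] | r j < r i]|)) => [|i _].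
  rewrite -card_cyc_min ?subsetT //; apply: eq_card => s; rewrite !inE.
  by have -> : perm_on setT s by apply/subsetP=> x; rewrite inE.
by apply: eq_card => j; rewrite !inE.
Qed.

End CyclicMinima.

Lemma cycmin1_lift n (t : {perm 'I_n}) :
  cycmin1 t = lift ord0 @: cyc_min (@nat_of_ord n) setT t.
Proof.
rewrite /cycmin1 (_ : [set i : 'I_n | _] = cyc_min (@nat_of_ord n) setT t) //.
by apply/setP=> i; rewrite !inE.
Qed.

Lemma card_ord_below n (i : 'I_n) : #|[set j : 'I_n | j < i]| = i.
Proof.
by rewrite -sum1dep_card -(big_ord_widen _ (fun _ => 1) (ltnW (ltn_ord i))) sum1_card card_ord.
Qed.

Lemma card_cyc_min_ord n (Y : {set 'I_n}) :
  #|[set t : {perm 'I_n} | cyc_min (@nat_of_ord n) setT t == Y]| = \prod_(i in ~: Y) i.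
Proof.
rewrite card_cyc_minT; last exact: ord_inj.
by apply: eq_bigr => i _; rewrite card_ord_below.
Qed.

Section RankZeroBetweenOneAndTwo.

Variable n : nat.
Hypothesis n_gt0 : 0 < n.

(* Ranking 0 between 1 and 2 makes the cyclic minima of [s] equal to
   [cycmin0 s] when 1 lies in the cycle of 0, and contain 0 otherwise. *)
Definition rank0 (i : 'I_n.+1) : nat := if i == 0 :> nat then 3 else i.*2.

Lemma rank0_inj : injective rank0.
Proof.
move=> i j; rewrite /rank0 => eq_ij; apply: ord_inj; move: eq_ij.
by case: eqP => i0; case: eqP => j0; lia.
Qed.

Let val_one : (inord 1 : 'I_n.+1) = 1 :> nat. Proof. by rewrite inordK. Qed.

Lemma rank0_lt3 (i : 'I_n.+1) : (rank0 i < 3) = (i == inord 1).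
Proof. by rewrite -(inj_eq (@ord_inj _)) val_one /rank0; case: eqP => i0; lia. Qed.

Lemma rank0_lift (i : 'I_n) : rank0 (lift ord0 i) = i.+1.*2.
Proof. by rewrite /rank0 lift0. Qed.

Lemma ord0_cyc_min_rank0 s :
  (ord0 \in cyc_min rank0 setT s) = ((inord 1 : 'I_n.+1) \notin porbit s ord0).
Proof.
rewrite !inE /=; apply/forall_inP/idP=> [min0|one_n0 i i0].
  by apply/negP=> /min0; rewrite leqNgt rank0_lt3 eqxx.
by rewrite leqNgt rank0_lt3; apply: contraNneq one_n0 => <-.
Qed.

Lemma cycmin0_cyc_min_rank0 s :
  (inord 1 : 'I_n.+1) \in porbit s ord0 -> cycmin0 s = cyc_min rank0 setT s.
Proof.
move=> one_0; apply/setP=> j; have [j0|j_gt0] := posnP j.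
  rewrite (_ : j = ord0) ?ord0_cyc_min_rank0 ?one_0 ?inE //; exact: ord_inj.
rewrite !inE j_gt0 /=; apply/forall_inP/forall_inP=> j_min i ji.
  rewrite /rank0 (negbTE (lt0n_neq0 j_gt0)); case: eqP => [i0|/eqP i_n0].
    have one_j : inord 1 \in porbit s j.
      by rewrite -(porbit_eq ji) (_ : i = ord0) //; exact: ord_inj.
    by have := j_min _ one_j; rewrite val_one /=; lia.
  by rewrite leq_double; apply: (implyP (j_min i ji)); rewrite lt0n.
apply/implyP=> i_gt0; have := j_min i ji.
by rewrite /rank0 (negbTE (lt0n_neq0 j_gt0)) (negbTE (lt0n_neq0 i_gt0)) leq_double.
Qed.

Lemma cyc_min_rank0E s (X : {set 'I_n.+1}) : ord0 \notin X ->
  ((inord 1 : 'I_n.+1) \in porbit s ord0) && (cycmin0 s == X) =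
  (cyc_min rank0 setT s == X).
Proof.
move=> X0; have [one_0|one_n0] /= := boolP (inord 1 \in porbit s ord0).
  by rewrite cycmin0_cyc_min_rank0.
by apply/esym/negbTE; apply: contraNneq X0 => <-; rewrite ord0_cyc_min_rank0.
Qed.

Lemma card_rank0_below_lift (i : 'I_n) :
  #|[set j | rank0 j < rank0 (lift ord0 i)]| = (0 < i) + i.
Proof.
rewrite -sum1dep_card big_mkcond big_ord_recl rank0_lift /=; congr (_ + _).
  by rewrite /rank0 /=; case: ifP => h; case: posnP => i0 //; lia.
rewrite -[RHS](card_ord_below i) -sum1dep_card /=.
by rewrite [RHS]big_mkcond; apply: eq_bigr => j _; rewrite rank0_lift ltn_double.
Qed.

Lemma card_cyc_min_rank0 (Y : {set 'I_n}) :
  #|[set s | cyc_min rank0 setT s == lift ord0 @: Y]| = \prod_(i in ~: Y) ((0 < i) + i).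
Proof.
rewrite card_cyc_minT; last exact: rank0_inj.
rewrite big_mkcond big_ord_recl /= [RHS]big_mkcond.
have -> : ord0 \in ~: (lift ord0 @: Y).
  by rewrite inE; apply/imsetP=> -[i _ /eqP]; rewrite (negbTE (neq_lift _ _)).
rewrite (_ : #|_| = 1) ?mul1n.
  by apply: eq_bigr => i _; rewrite !inE mem_imset ?card_rank0_below_lift //; exact: lift_inj.
by rewrite -(cards1 (inord 1 : 'I_n.+1)); apply: eq_card => j; rewrite !inE rank0_lt3.
Qed.

Lemma pair_conditionE k (s : {perm 'I_n.+1}) (t : {perm 'I_n}) :
  [&& #|porbits s| == k, #|porbits t| == k, (inord 1 : 'I_n.+1) \in porbit s ord0
    & cycmin0 s == cycmin1 t] =
  (#|cyc_min (@nat_of_ord n) setT t| == k) &&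
  (cyc_min rank0 setT s == lift ord0 @: cyc_min (@nat_of_ord n) setT t).
Proof.
rewrite cycmin1_lift (card_porbits_cyc_min rank0_inj) (card_porbits_cyc_min (@ord_inj n)).
set Y := cyc_min _ setT t.
have Y0 : ord0 \notin lift ord0 @: Y.
  by apply/imsetP=> -[i _ /eqP]; rewrite (negbTE (neq_lift _ _)).
apply/and4P/andP=> [[_ Yk one_0 sY]|[Yk /eqP sY]].
  by rewrite -(cyc_min_rank0E s Y0) one_0.
have /andP[one_0 ->] : (inord 1 \in porbit s ord0) && (cycmin0 s == lift ord0 @: Y).
  by rewrite cyc_min_rank0E // sY.
by rewrite sY card_imset ?Yk //; exact: lift_inj.
Qed.

Lemma card_pair_fiber k (t : {perm 'I_n}) :
  #|[set s | [&& #|porbits s| == k, #|porbits t| == k, (inord 1 : 'I_n.+1) \in porbit s ord0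
               & cycmin0 s == cycmin1 t]]| =
  (#|cyc_min (@nat_of_ord n) setT t| == k) *
  \prod_(i in ~: cyc_min (@nat_of_ord n) setT t) ((0 < i) + i).
Proof.
set Y := cyc_min _ setT t.
rewrite (eq_card (B := [set s | (#|Y| == k) && (cyc_min rank0 setT s == lift ord0 @: Y)])).
  rewrite -card_cyc_min_rank0; case: (#|Y| == k); rewrite ?mul1n ?mul0n.
    by apply: eq_card => s; rewrite !inE.
  by apply/eqP; rewrite cards_eq0; apply/eqP/setP=> s; rewrite !inE.
by move=> s; rewrite !inE pair_conditionE.
Qed.

End RankZeroBetweenOneAndTwo.
Arguments rank0 {n} i.

Section LegendreStirlingPolynomial.

Local Open Scope ring_scope.
Import GRing.Theory.

Lemma js_coef_prod (z : int) (n k : nat) :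
  js z n k = (\prod_(i < n) ('X - (i%:Z * (i%:Z + z))%:P))`_k.
Proof.
elim: n k => [|n IHn] k; first by rewrite big_ord0 coefC; case: k.
rewrite big_ord_recr /= mulrBr coefB coefMX coefMC.
case: k => [|k] /=; last by rewrite -!IHn mulrC.
by rewrite -IHn; case: n {IHn} => [|n]; rewrite /= ?mul0r ?mulr0 ?subr0.
Qed.

Lemma coef_prod_XsubC_ord (R : comNzRingType) (f : nat -> R) (n k : nat) :
  (k <= n)%N ->
  (\prod_(i < n) ('X - (f i)%:P))`_k =
  (-1) ^+ (n - k) * \sum_(I : {set 'I_n} | #|I| == (n - k)%N) \prod_(i in I) f i.
Proof.
move=> kn; rewrite -(big_mkord xpredT (fun i => 'X - (f i)%:P)) /index_iota subn0.
have := @coef_prod_XsubC R (mkseq f n) k; rewrite big_map size_mkseq => /(_ kn) ->.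
congr (_ * _); apply: eq_bigr => I _; apply: eq_bigr => i _.
by rewrite nth_mkseq.
Qed.

Lemma abs_ls_sum_prod (n k : nat) : (k <= n)%N ->
  `|ls n k|%N = (\sum_(I : {set 'I_n} | #|I| == (n - k)%N) \prod_(i in I) (i * i.+1))%N.
Proof.
move=> kn; rewrite /ls js_coef_prod (coef_prod_XsubC_ord (fun i => i%:Z * (i%:Z + 1))) //.
rewrite abszMsign -[RHS]absz_nat -natz natr_sum; congr absz; apply: eq_bigr => I _.
by rewrite natr_prod; apply: eq_bigr => i _; rewrite natz PoszM -addn1 PoszD.
Qed.

End LegendreStirlingPolynomial.

Theorem corollary15 (n k : nat) :
  (0 < k)%N -> (k <= n)%N ->
  `|ls n k|%N =
  #|[set p : {perm 'I_n.+1} * {perm 'I_n} |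
      [&& #|porbits p.1| == k, #|porbits p.2| == k,
          (inord 1 : 'I_n.+1) \in porbit p.1 ord0
        & cycmin0 p.1 == cycmin1 p.2]]|.
Proof.
move=> k_gt0 kn; have n_gt0 : 0 < n := leq_trans k_gt0 kn.
rewrite abs_ls_sum_prod // card_setX_sum /=.
rewrite (eq_bigr _ (fun t _ => card_pair_fiber n_gt0 k t)).
rewrite (sum_comp_card (fun t => cyc_min (@nat_of_ord n) setT t)
  (fun Y => (#|Y| == k) * \prod_(i in ~: Y) ((0 < i) + i))).
rewrite -(sum_card_setC (fun I : {set 'I_n} => \prod_(i in I) (i * i.+1)) (card_ord n)) //.
rewrite big_mkcond.
apply: eq_bigr => Y _; rewrite card_cyc_min_ord mulnCA; case: (_ == k); rewrite ?muln0 //.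
by rewrite mul1n -big_split /=; apply: eq_bigr => i _; case: (nat_of_ord i).
Qed.
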